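(* Let $n\in\mathbb{N}$ and $n-1<\beta<n$, and let $X=\mathsf{X}_\beta$ with alphabet $\mathcal{A}_\beta$. Define $\varphi\colon\mathcal{A}_\beta\to\{0,1\}^*$ by $\varphi(j)=1^j0$, extend it to words by concatenation, and let $X'$ be the shift space whose language consists of all subwords of words $\varphi(w)$, $w\in\mathcal{B}(X)$. Define $\varphi\colon X^+\to X'^+$ by $\varphi(x_1x_2\cdots)=\varphi(x_1)\varphi(x_2)\cdots$. Then $\varphi\colon X^+\to X'^+$ is surjective and order preserving with respect to the lexicographic order.
   Context: For $\beta>1$, let $e(\beta)=x_1x_2\cdots$ be the $\beta$-expansion of $1$ ($x_1=\lfloor\beta\rfloor$, $r_1=\{\beta\}$, $x_n=\lfloor\beta r_{n-1}\rfloor$, $r_n=\{\beta r_{n-1}\}$). The generating sequence is $g(\beta)=e(\beta)$ if $e(\beta)$ has infinitely many nonzero terms, and $g(\beta)=(a_1\cdots a_{k-1}(a_k-1))^\infty$ if $e(\beta)=a_1\cdots a_k00\cdots$ with $a_k\neq0$. The beta-shift $\mathsf{X}_\beta$ is the two-sided shift space whose language $\mathcal{B}(\mathsf{X}_\beta)$ is the set of words $x_n(t)\cdots x_m(t)$ occurring in $\beta$-expansions of $t\in[0,1]$; for non-integer $\beta$ its alphabet is $\mathcal{A}_\beta=\{0,\ldots,\lfloor\beta\rfloor\}$. A one-sided sequence $y_1y_2\cdots$ is a right-ray of $\mathsf{X}_\beta$ iff $y_ky_{k+1}\cdots\le g(\beta)$ lexicographically for all $k$. For a shift space $Y$, $Y^+=\{y_0y_1y_2\cdots\mid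 y\in Y\}$ is its set of right-rays, ordered lexicographically. *)

From Stdlib Require Import Reals ZArith List Arith.
Import ListNotations.
Open Scope R_scope.

(** Beta-expansion of t: r_0 = t, r_{k+1} = {beta * r_k};
    digit k = x_{k+1} = floor(beta * r_k).  In particular
    x_1 = floor(beta t), r_1 = {beta t}, x_n = floor(beta r_{n-1}). *)
Fixpoint beta_rem (beta t : R) (k : nat) : R :=
  match k with
  | O => t
  | S k' => frac_part (beta * beta_rem beta t k')
  end.

Definition beta_digit (beta t : R) (k : nat) : nat :=
  Z.to_nat (Int_part (beta * beta_rem beta t k)).

Definition lang_beta (beta : R) (w : list nat) : Prop :=
  exists t, 0 <= t <= 1 /\
  exists i, w = map (beta_digit beta t) (seq i (length w)).

Definition window (y : Z -> nat) (i : Z) (len : nat) : list nat :=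
  map (fun k => y (i + Z.of_nat k)%Z) (seq 0 len).

Definition in_shift (L : list nat -> Prop) (y : Z -> nat) : Prop :=
  forall i len, L (window y i len).

Definition right_ray (L : list nat -> Prop) (r : nat -> nat) : Prop :=
  exists y, in_shift L y /\ forall k, r k = y (Z.of_nat k).

Definition phi_letter (j : nat) : list nat := repeat 1%nat j ++ [0%nat].
Definition phi_word (w : list nat) : list nat := flat_map phi_letter w.

Definition lang_phi (L : list nat -> Prop) (u : list nat) : Prop :=
  exists w, L w /\ exists a b, phi_word w = a ++ u ++ b.

(** phi on one-sided sequences: phi(x_0) phi(x_1) ... ; the k-th symbol lies
    within the first k+1 blocks since every block is nonempty. *)
Definition phi_seq (x : nat -> nat) (k : nat) : nat :=
  nth k (phi_word (map x (seq 0 (S k)))) 0%nat.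

Definition lex_le (x y : nat -> nat) : Prop :=
  (forall k, x k = y k) \/
  exists k, (forall i, (i < k)%nat -> x i = y i) /\ (x k < y k)%nat.

From Stdlib Require Import Reals ZArith List Arith Lia Lra Classical.
Import ListNotations.
Open Scope R_scope.

(* phi preserves the lexicographic order since 1^j 0 < 1^j' 0 whenever j < j'.  A point of
   X' is binary, and as the letters of B(X) are smaller than n its runs of ones are shorter
   than n; cutting after each 0 decodes it as phi(x).  This x lies in X^+: a phi-image
   occurring strictly inside phi(w) is the image of a factor of w, or of a word obtained from
   w by lowering one digit and keeping the digits after it, and both lowering a digit of a
   beta-expansion and prepending zeros give the beta-expansion of another point of [0,1). *)


Lemma phi_word_cons c w : phi_word (c :: w) = repeat 1%nat c ++ 0%nat :: phi_word w.
Proof. unfold phi_word, phi_letter; simpl. rewrite <- app_assoc. reflexivity. Qed.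

Lemma phi_word_app u v : phi_word (u ++ v) = phi_word u ++ phi_word v.
Proof. apply flat_map_app. Qed.

Lemma phi_word_repeat0 a : phi_word (repeat 0%nat a) = repeat 0%nat a.
Proof. induction a as [|a IH]; [reflexivity|]. simpl repeat. rewrite phi_word_cons, IH. reflexivity. Qed.

Lemma length_phi_word w : (length w <= length (phi_word w))%nat.
Proof.
  induction w as [|c w IH]; [simpl; lia|].
  rewrite phi_word_cons, length_app, repeat_length. simpl. lia.
Qed.

Lemma phi_word_binary w e : In e (phi_word w) -> e = 0%nat \/ e = 1%nat.
Proof.
  induction w as [|c w IH]; [contradiction|].
  rewrite phi_word_cons. intros H. apply in_app_iff in H as [H|[H|H]]; auto.
  apply repeat_spec in H. auto.
Qed.

Lemma ones_zero_inj c d l l' :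
  repeat 1%nat c ++ 0%nat :: l = repeat 1%nat d ++ 0%nat :: l' -> c = d /\ l = l'.
Proof.
  revert d. induction c as [|c IH]; intros [|d] H; simpl in H; inversion H; auto.
  destruct (IH d H1). auto.
Qed.

Lemma ones_neq_shorter_block c p b l :
  (c < p)%nat -> repeat 1%nat p ++ b <> repeat 1%nat c ++ 0%nat :: l.
Proof.
  revert p. induction c as [|c IH]; intros [|p] Hcp H; simpl in H; try lia; inversion H.
  apply (IH p); [lia | assumption].
Qed.

Lemma app_eq_ones_inside a c X Y : (length a <= c)%nat -> a ++ X = repeat 1%nat c ++ Y ->
  a = repeat 1%nat (length a) /\ X = repeat 1%nat (c - length a) ++ Y.
Proof.
  revert c. induction a as [|e a IH]; simpl; intros c Hl H.
  - rewrite Nat.sub_0_r. auto.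
  - destruct c as [|c]; [lia|]. simpl in H. inversion H; subst.
    destruct (IH c) as [Ha HX]; [lia | assumption |].
    rewrite <- Ha. auto.
Qed.

Lemma app_eq_ones_zero_beyond a c X Y : (c < length a)%nat ->
  a ++ X = repeat 1%nat c ++ 0%nat :: Y -> exists a', a' ++ X = Y.
Proof.
  revert a. induction c as [|c IH]; intros [|e a] Hl H; simpl in *; try lia; inversion H; subst; eauto.
  apply (IH a); [lia | assumption].
Qed.

Lemma phi_word_prefix_inv v w b : phi_word w = phi_word v ++ b -> exists w', w = v ++ w'.
Proof.
  revert w. induction v as [|c v IH]; intros w H; [exists w; reflexivity|].
  destruct w as [|d w].
  - apply (f_equal (@length nat)) in H. rewrite phi_word_cons, !length_app in H. simpl in H. lia.
  - rewrite !phi_word_cons, <- app_assoc in H. apply ones_zero_inj in H as [-> H].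
    destruct (IH w H) as [w' ->]. exists w'; reflexivity.
Qed.

Lemma phi_word_no_long_run w a b m : (0 < m)%nat -> (forall c, In c w -> (c < m)%nat) ->
  phi_word w <> a ++ repeat 1%nat m ++ b.
Proof.
  revert a. induction w as [|c w IH]; intros a Hm Hw H.
  - apply (f_equal (@length nat)) in H. rewrite !length_app, repeat_length in H. simpl in H. lia.
  - rewrite phi_word_cons in H. symmetry in H.
    destruct (Nat.le_gt_cases (length a) c) as [Hle|Hgt].
    + destruct (app_eq_ones_inside a c _ _ Hle H) as [Ha _].
      rewrite Ha, app_assoc, <- repeat_app in H.
      refine (ones_neq_shorter_block c _ _ _ _ H). specialize (Hw c (or_introl eq_refl)). lia.
    + destruct (app_eq_ones_zero_beyond a c _ _ Hgt H) as [a' Ha'].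
      apply (IH a' Hm); [intros; apply Hw; simpl; auto | symmetry; exact Ha'].
Qed.

Fixpoint beta_prefix (beta s : R) (v : list nat) : Prop :=
  match v with
  | [] => True
  | c :: v' => c = beta_digit beta s 0 /\ beta_prefix beta (beta_rem beta s 1) v'
  end.

Lemma beta_rem_add beta t i k : beta_rem beta t (i + k) = beta_rem beta (beta_rem beta t i) k.
Proof.
  induction k as [|k IH]; [rewrite Nat.add_0_r; reflexivity|].
  rewrite Nat.add_succ_r. simpl. rewrite IH. reflexivity.
Qed.

Lemma beta_digit_add beta t i k : beta_digit beta t (i + k) = beta_digit beta (beta_rem beta t i) k.
Proof. unfold beta_digit. rewrite beta_rem_add. reflexivity. Qed.

Lemma beta_rem_unit beta t i : 0 <= t <= 1 -> 0 <= beta_rem beta t i <= 1.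
Proof. intros Ht. destruct i; simpl; [lra|]. destruct (base_fp (beta * beta_rem beta t i)). lra. Qed.

Lemma beta_rem1_lt1 beta t : 0 <= beta_rem beta t 1 < 1.
Proof. simpl. destruct (base_fp (beta * t)). lra. Qed.

Lemma beta_prefix_of_map beta v i t :
  v = map (beta_digit beta t) (seq i (length v)) -> beta_prefix beta (beta_rem beta t i) v.
Proof.
  revert i. induction v as [|c v IH]; intros i H; cbn [beta_prefix]; auto.
  injection H as -> Hv. split.
  - rewrite <- (Nat.add_0_r i) at 1. apply beta_digit_add.
  - rewrite <- beta_rem_add, Nat.add_1_r. apply IH. exact Hv.
Qed.

Lemma beta_prefix_map beta v s :
  beta_prefix beta s v -> v = map (beta_digit beta s) (seq 0 (length v)).
Proof.
  revert s. induction v as [|c v IH]; intros s H; [reflexivity|].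
  destruct H as [-> H]. simpl. f_equal. rewrite (IH _ H), length_map, length_seq, <- seq_shift, map_map.
  apply map_ext. intros k. symmetry. apply (beta_digit_add beta s 1 k).
Qed.

Lemma lang_beta_spec beta v : lang_beta beta v <-> exists s, 0 <= s <= 1 /\ beta_prefix beta s v.
Proof.
  split.
  - intros [t [Ht [i Hi]]]. exists (beta_rem beta t i).
    split; [apply beta_rem_unit; exact Ht | apply beta_prefix_of_map; exact Hi].
  - intros [s [Hs H]]. exists s. split; [exact Hs|]. exists 0%nat. apply beta_prefix_map. exact H.
Qed.

Lemma beta_prefix_app beta u v s : beta_prefix beta s (u ++ v) ->
  beta_prefix beta s u /\ beta_prefix beta (beta_rem beta s (length u)) v.
Proof.
  revert s. induction u as [|c u IH]; intros s H; cbn [beta_prefix app length] in *; auto.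
  destruct H as [Hc H]. destruct (IH _ H) as [Hu Hv]. split; auto.
  change (S (length u)) with (1 + length u)%nat. rewrite beta_rem_add. exact Hv.
Qed.

Lemma lang_beta_infix beta A u B : lang_beta beta (A ++ u ++ B) -> lang_beta beta u.
Proof.
  intros H. apply lang_beta_spec in H as [s [Hs H]].
  apply beta_prefix_app in H as [_ H]. apply beta_prefix_app in H as [H _].
  apply lang_beta_spec. exists (beta_rem beta s (length A)). split; [apply beta_rem_unit|]; assumption.
Qed.

Lemma Int_frac_part_nat_add (m : nat) r : 0 <= r < 1 ->
  Int_part (INR m + r) = Z.of_nat m /\ frac_part (INR m + r) = r.
Proof.
  intros Hr.
  assert (Hup : (Z.of_nat m + 1)%Z = up (INR m + r)).
  { apply up_tech; rewrite ?plus_IZR, <- INR_IZR_INZ; lra. }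
  assert (Hint : Int_part (INR m + r) = Z.of_nat m) by (unfold Int_part; lia).
  split; [exact Hint|]. unfold frac_part. rewrite Hint, <- INR_IZR_INZ. lra.
Qed.

Lemma beta_digit_rem beta s : 0 < beta -> 0 <= s ->
  INR (beta_digit beta s 0) + beta_rem beta s 1 = beta * s.
Proof.
  intros Hb Hs. unfold beta_digit. simpl.
  destruct (base_Int_part (beta * s)) as [H1 H2].
  assert (Hz : (0 <= Int_part (beta * s))%Z).
  { assert (-1 < IZR (Int_part (beta * s))) by nra. apply lt_IZR in H. lia. }
  rewrite INR_IZR_INZ, Z2Nat.id by exact Hz. unfold frac_part. lra.
Qed.

Lemma lang_beta_letter_lt beta n w c : 1 < beta -> beta < INR n ->
  lang_beta beta w -> In c w -> (c < n)%nat.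
Proof.
  intros Hb Hn Hw. apply lang_beta_spec in Hw as [s [Hs H]]. revert s Hs H.
  induction w as [|d w IH]; intros s Hs H Hc; [contradiction|].
  destruct H as [-> H]. destruct Hc as [<- | Hc].
  - pose proof (beta_digit_rem beta s ltac:(lra) ltac:(lra)).
    pose proof (beta_rem1_lt1 beta s). apply INR_lt. nra.
  - pose proof (beta_rem1_lt1 beta s). apply (IH (beta_rem beta s 1)); [lra | exact H | exact Hc].
Qed.

Lemma beta_prefix_cons beta d r v : 1 < beta -> 0 <= r < 1 -> INR d + r < beta ->
  beta_prefix beta r v -> exists s, 0 <= s < 1 /\ beta_prefix beta s (d :: v).
Proof.
  intros Hb Hr Hdr H. exists ((INR d + r) / beta).
  assert (E : beta * ((INR d + r) / beta) = INR d + r) by (field; lra).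
  destruct (Int_frac_part_nat_add d r Hr) as [I F].
  pose proof (pos_INR d).
  split.
  - split.
    + unfold Rdiv. apply Rmult_le_pos; [lra | apply Rlt_le, Rinv_0_lt_compat; lra].
    + apply Rmult_lt_reg_l with beta; [lra|]. rewrite E. lra.
  - simpl. unfold beta_digit. simpl beta_rem. rewrite E, I, F, Nat2Z.id. auto.
Qed.

Lemma beta_prefix_zeros beta a s u : 1 < beta -> 0 <= s < 1 -> beta_prefix beta s u ->
  exists s', 0 <= s' < 1 /\ beta_prefix beta s' (repeat 0%nat a ++ u).
Proof.
  intros Hb Hs H. induction a as [|a IH]; [eauto|].
  destruct IH as [s' [Hs' H']]. apply (beta_prefix_cons beta 0 s'); simpl; auto; lra.
Qed.

Lemma beta_prefix_lower_digit beta s v0 v : 1 < beta -> 0 <= s <= 1 ->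
  (v0 < beta_digit beta s 0)%nat -> beta_prefix beta (beta_rem beta s 1) v ->
  exists s', 0 <= s' < 1 /\ beta_prefix beta s' (v0 :: v).
Proof.
  intros Hb Hs Hv H. pose proof (beta_rem1_lt1 beta s).
  pose proof (beta_digit_rem beta s ltac:(lra) ltac:(lra)).
  assert (INR v0 + 1 <= INR (beta_digit beta s 0)) by (rewrite <- S_INR; apply le_INR; lia).
  apply (beta_prefix_cons beta v0 (beta_rem beta s 1)); auto. nra.
Qed.

(* A phi-image placed strictly inside phi(w) starts either at a block boundary, so that it
   is the image of a factor of w after a nonempty prefix, or inside a block 1^c 0, so that
   its first letter is smaller than c and the rest is the image of a factor of what follows. *)
Lemma beta_prefix_phi_infix beta w s a v b : 1 < beta -> 0 <= s <= 1 -> beta_prefix beta s w ->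
  phi_word w = a ++ phi_word v ++ b -> a <> [] -> exists s', 0 <= s' < 1 /\ beta_prefix beta s' v.
Proof.
  intros Hb. revert s a. induction w as [|c w IH]; intros s a Hs Hw H Ha.
  { destruct a; [congruence | discriminate]. }
  destruct v as [|v0 v]; [exists 0; split; [lra | exact I]|].
  destruct Hw as [Hc Hw]. pose proof (beta_rem1_lt1 beta s) as Hr.
  rewrite !phi_word_cons in H. symmetry in H.
  destruct (Nat.le_gt_cases (length a) c) as [Hle|Hgt].
  - destruct (app_eq_ones_inside a c _ _ Hle H) as [_ Hrest].
    rewrite <- app_assoc in Hrest. apply ones_zero_inj in Hrest as [Hv0 Hrest].
    destruct (phi_word_prefix_inv v w b (eq_sym Hrest)) as [w' ->].
    apply beta_prefix_app in Hw as [Hw _].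
    apply (beta_prefix_lower_digit beta s v0 v Hb Hs); [|exact Hw].
    destruct a; [congruence|]. simpl in Hv0, Hle. lia.
  - destruct (app_eq_ones_zero_beyond a c _ _ Hgt H) as [[|e a'] Hrest].
    + rewrite <- phi_word_cons in Hrest.
      destruct (phi_word_prefix_inv (v0 :: v) w b (eq_sym Hrest)) as [w' ->].
      apply beta_prefix_app in Hw as [Hw _]. eauto.
    + apply (IH (beta_rem beta s 1) (e :: a')); [lra | exact Hw | | congruence].
      rewrite <- Hrest, phi_word_cons. reflexivity.
Qed.

Lemma nth_map_seq (f : nat -> nat) s len j d : (j < len)%nat ->
  nth j (map f (seq s len)) d = f (s + j)%nat.
Proof.
  intros Hj. rewrite (nth_indep _ d (f 0%nat)) by (rewrite length_map, length_seq; exact Hj).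
  rewrite map_nth, seq_nth by exact Hj. reflexivity.
Qed.

Lemma length_window y i len : length (window y i len) = len.
Proof. unfold window. rewrite length_map, length_seq. reflexivity. Qed.

Lemma nth_window y i len j : (j < len)%nat -> nth j (window y i len) 0%nat = y (i + Z.of_nat j)%Z.
Proof. intros Hj. unfold window. rewrite nth_map_seq by exact Hj. reflexivity. Qed.

Lemma window_neg1 (x : nat -> nat) (y : Z -> nat) N : (forall k, x k = y (Z.of_nat k)) ->
  window y (-1)%Z (S N) = y (-1)%Z :: map x (seq 0 N).
Proof.
  intros Hxy. unfold window. cbn [seq map]. f_equal.
  rewrite <- seq_shift, map_map. apply map_ext. intros k. rewrite Hxy. f_equal. lia.
Qed.

Lemma infix_of_nth (u l : list nat) K : (K + length u <= length l)%nat ->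
  (forall j, (j < length u)%nat -> nth j u 0%nat = nth (K + j) l 0%nat) ->
  exists A B, l = A ++ u ++ B.
Proof.
  intros Hl Hn.
  assert (E : u = firstn (length u) (skipn K l)).
  { apply nth_ext with 0%nat 0%nat.
    - rewrite length_firstn, length_skipn. lia.
    - intros j Hj. rewrite nth_firstn, nth_skipn. destruct (Nat.ltb_spec j (length u)); [|lia].
      apply Hn. exact Hj. }
  exists (firstn K l), (skipn (length u) (skipn K l)).
  rewrite E at 1. rewrite !firstn_skipn. reflexivity.
Qed.

Lemma right_ray_of_padded_factors (L : list nat -> Prop) (f : nat -> nat) (G : nat -> list nat) :
  (forall N, (N <= length (G N))%nat) ->
  (forall N k, (k < N)%nat -> nth k (G N) 0%nat = f k) ->
  (forall a N A u B, repeat 0%nat a ++ G N = A ++ u ++ B -> L u) ->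
  right_ray L f.
Proof.
  intros HG Hf HL. set (y := fun p => if (p <? 0)%Z then 0%nat else f (Z.to_nat p)).
  exists y. split.
  - intros i len.
    destruct (infix_of_nth (window y i len) (repeat 0%nat (Z.to_nat (- i)) ++ G (Z.to_nat i + len)%nat)
                (Z.to_nat i)) as [A [B HAB]].
    + rewrite length_window, length_app, repeat_length. pose proof (HG (Z.to_nat i + len)%nat). lia.
    + intros j Hj. rewrite length_window in Hj. rewrite nth_window by exact Hj. unfold y.
      destruct (Z.ltb_spec (i + Z.of_nat j) 0).
      * rewrite app_nth1, nth_repeat by (rewrite repeat_length; lia). reflexivity.
      * rewrite app_nth2 by (rewrite repeat_length; lia). rewrite repeat_length, Hf by lia.
        f_equal. lia.
    + exact (HL _ _ _ _ _ HAB).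
  - intros k. unfold y. destruct (Z.ltb_spec (Z.of_nat k) 0); [lia|]. rewrite Nat2Z.id. reflexivity.
Qed.

Lemma right_ray_beta_prefix beta x N : right_ray (lang_beta beta) x ->
  exists s, 0 <= s < 1 /\ beta_prefix beta s (map x (seq 0 N)).
Proof.
  intros [y [Hy Hxy]]. destruct (proj1 (lang_beta_spec _ _) (Hy (-1)%Z (S N))) as [s [_ H]].
  rewrite (window_neg1 x y N Hxy) in H. destruct H as [_ H].
  exists (beta_rem beta s 1). split; [apply beta_rem1_lt1 | exact H].
Qed.

Lemma right_ray_of_beta_prefix beta x : 1 < beta ->
  (forall N, exists s, 0 <= s < 1 /\ beta_prefix beta s (map x (seq 0 N))) ->
  right_ray (lang_beta beta) x.
Proof.
  intros Hb Hx. apply right_ray_of_padded_factors with (G := fun N => map x (seq 0 N)).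
  - intros N. rewrite length_map, length_seq. reflexivity.
  - intros N k Hk. apply nth_map_seq. exact Hk.
  - intros a N A u B H. apply (lang_beta_infix beta A u B). rewrite <- H.
    destruct (Hx N) as [s [Hs Hp]]. destruct (beta_prefix_zeros beta a s _ Hb Hs Hp) as [s' [Hs' Hp']].
    apply lang_beta_spec. exists s'. split; [lra | exact Hp'].
Qed.

Lemma phi_word_seq_split (x : nat -> nat) N1 N2 : (N1 <= N2)%nat ->
  phi_word (map x (seq 0 N2)) = phi_word (map x (seq 0 N1)) ++ phi_word (map x (seq N1 (N2 - N1))).
Proof.
  intros H. replace N2 with (N1 + (N2 - N1))%nat at 1 by lia.
  rewrite seq_app, map_app, phi_word_app. reflexivity.
Qed.

Lemma phi_seq_nth x N m : (m < length (phi_word (map x (seq 0 N))))%nat ->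
  phi_seq x m = nth m (phi_word (map x (seq 0 N))) 0%nat.
Proof.
  intros H. unfold phi_seq. destruct (Nat.le_ge_cases N (S m)) as [Hle|Hge].
  - rewrite (phi_word_seq_split x N (S m) Hle), app_nth1 by exact H. reflexivity.
  - rewrite (phi_word_seq_split x (S m) N Hge), app_nth1; [reflexivity|].
    pose proof (length_phi_word (map x (seq 0 (S m)))). rewrite length_map, length_seq in *. lia.
Qed.

Lemma phi_seq_right_ray beta x : 1 < beta -> right_ray (lang_beta beta) x ->
  right_ray (lang_phi (lang_beta beta)) (phi_seq x).
Proof.
  intros Hb Hx.
  apply right_ray_of_padded_factors with (G := fun N => phi_word (map x (seq 0 N))).
  - intros N. pose proof (length_phi_word (map x (seq 0 N))). rewrite length_map, length_seq in *. exact H.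
  - intros N k Hk. symmetry. apply phi_seq_nth.
    pose proof (length_phi_word (map x (seq 0 N))). rewrite length_map, length_seq in *. lia.
  - intros a N A u B H. exists (repeat 0%nat a ++ map x (seq 0 N)). split.
    + destruct (right_ray_beta_prefix beta x N Hx) as [s [Hs Hp]].
      destruct (beta_prefix_zeros beta a s _ Hb Hs Hp) as [s' [Hs' Hp']].
      apply lang_beta_spec. exists s'. split; [lra | exact Hp'].
    + exists A, B. rewrite phi_word_app, phi_word_repeat0. exact H.
Qed.

Lemma nth_block_ones (P : list nat) c i : (length P <= i < length P + c)%nat ->
  nth i (P ++ repeat 1%nat c ++ [0%nat]) 0%nat = 1%nat.
Proof.
  intros Hi. rewrite app_nth2, app_nth1 by (rewrite ?repeat_length; lia).
  apply nth_repeat_lt. lia.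
Qed.

Lemma nth_block_end (P : list nat) c : nth (length P + c) (P ++ repeat 1%nat c ++ [0%nat]) 0%nat = 0%nat.
Proof.
  rewrite app_nth2, app_nth2 by (rewrite ?repeat_length; lia).
  rewrite repeat_length. replace (length P + c - length P - c)%nat with 0%nat by lia. reflexivity.
Qed.

Lemma phi_seq_lex_mono x y : lex_le x y -> lex_le (phi_seq x) (phi_seq y).
Proof.
  intros [Heq | [k [Hlt Hk]]].
  - left. intros m. unfold phi_seq. rewrite (map_ext x y Heq). reflexivity.
  - right. set (P := phi_word (map x (seq 0 k))).
    assert (Hnth : forall z : nat -> nat, (forall i, (i < k)%nat -> z i = x i) -> forall i,
      (i <= length P + z k)%nat -> phi_seq z i = nth i (P ++ repeat 1%nat (z k) ++ [0%nat]) 0%nat).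
    { intros z Hz i Hi.
      assert (Hblock : phi_word (map z (seq 0 (S k))) = P ++ repeat 1%nat (z k) ++ [0%nat]).
      { rewrite seq_S, map_app, phi_word_app. unfold P. f_equal.
        - f_equal. apply map_ext_in. intros j Hj. apply in_seq in Hj. apply Hz. lia.
        - apply phi_word_cons. }
      rewrite <- Hblock. apply phi_seq_nth.
      rewrite Hblock, !length_app, repeat_length. simpl. lia. }
    assert (Hx : forall i, (i < k)%nat -> x i = x i) by reflexivity.
    assert (Hy : forall i, (i < k)%nat -> y i = x i) by (intros i Hi; symmetry; apply Hlt, Hi).
    exists (length P + x k)%nat. split.
    + intros i Hi. rewrite (Hnth x Hx), (Hnth y Hy) by lia.
      destruct (Nat.lt_ge_cases i (length P)).
      * rewrite !app_nth1 by exact H. reflexivity.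
      * rewrite !nth_block_ones by lia. reflexivity.
    + rewrite (Hnth x Hx), (Hnth y Hy), nth_block_end, nth_block_ones by lia. lia.
Qed.

Lemma right_ray_lang_phi_binary (L : list nat -> Prop) y : right_ray (lang_phi L) y ->
  forall k, y k = 0%nat \/ y k = 1%nat.
Proof.
  intros [z [Hz Hy]] k. rewrite Hy. destruct (Hz (Z.of_nat k) 1%nat) as [w [_ [A [B E]]]].
  apply (phi_word_binary w). rewrite E. apply in_or_app. right. apply in_or_app. left.
  unfold window. simpl. left. f_equal. lia.
Qed.

Lemma right_ray_lang_phi_zero_gap (L : list nat -> Prop) n y : (0 < n)%nat ->
  (forall w, L w -> forall c, In c w -> (c < n)%nat) -> right_ray (lang_phi L) y ->
  forall p, exists q, (p <= q < p + n)%nat /\ y q = 0%nat.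
Proof.
  intros Hn HL Hray p. pose proof (right_ray_lang_phi_binary L y Hray) as Hbin.
  destruct Hray as [z [Hz Hy]]. apply NNPP. intros Hno.
  assert (Hones : window z (Z.of_nat p) n = repeat 1%nat n).
  { apply nth_ext with 0%nat 0%nat; rewrite length_window; [rewrite repeat_length; reflexivity|].
    intros j Hj. rewrite nth_window, nth_repeat_lt by exact Hj.
    rewrite <- Nat2Z.inj_add, <- Hy. destruct (Hbin (p + j)%nat) as [H0|H1]; [|exact H1].
    exfalso. apply Hno. exists (p + j)%nat. split; [lia | exact H0]. }
  destruct (Hz (Z.of_nat p) n) as [w [Hw [A [B HE]]]]. rewrite Hones in HE.
  exact (phi_word_no_long_run w A B n Hn (HL w Hw) HE).
Qed.

Fixpoint next_zero (y : nat -> nat) (p fuel : nat) : nat :=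
  match fuel with
  | O => p
  | S f => if Nat.eqb (y p) 0 then p else next_zero y (S p) f
  end.

Lemma next_zero_spec y fuel p : (exists q, p <= q < p + fuel /\ y q = 0)%nat ->
  (p <= next_zero y p fuel /\ y (next_zero y p fuel) = 0 /\
   forall k, p <= k < next_zero y p fuel -> y k <> 0)%nat.
Proof.
  revert p. induction fuel as [|fuel IH]; intros p [q [Hq Hyq]]; simpl; [lia|].
  destruct (Nat.eqb_spec (y p) 0) as [Hp|Hp]; [split; [lia | split; [exact Hp | lia]]|].
  destruct (IH (S p)) as [H1 [H2 H3]].
  { exists q. split; [|exact Hyq]. assert (q <> p) by (intros ->; contradiction). lia. }
  split; [lia|]. split; [exact H2|]. intros k Hk.
  destruct (Nat.eq_dec k p) as [->|]; [exact Hp | apply H3; lia].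
Qed.

Fixpoint block_start (y : nat -> nat) (n j : nat) : nat :=
  match j with
  | O => O
  | S j => S (next_zero y (block_start y n j) n)
  end.

Lemma map_ones_zero y p q : (forall k, p <= k < p + q -> y k = 1)%nat -> y (p + q)%nat = 0%nat ->
  map y (seq p (S q)) = repeat 1%nat q ++ [0%nat].
Proof.
  revert p. induction q as [|q IH]; intros p Hones Hzero.
  - rewrite Nat.add_0_r in Hzero. simpl. rewrite Hzero. reflexivity.
  - change (map y (seq p (S (S q)))) with (y p :: map y (seq (S p) (S q))).
    rewrite (Hones p) by lia. rewrite IH; [reflexivity | intros k Hk; apply Hones; lia |].
    rewrite <- Hzero. f_equal. lia.
Qed.

(* Cutting after each zero decodes a binary sequence whose runs of ones are bounded. *)
Lemma phi_word_decode y n : (forall k, y k = 0 \/ y k = 1)%nat ->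
  (forall p, exists q, p <= q < p + n /\ y q = 0)%nat ->
  exists x, forall m, exists N, (m <= N)%nat /\ phi_word (map x (seq 0 m)) = map y (seq 0 N).
Proof.
  intros Hbin Hgap.
  set (x := fun j => (next_zero y (block_start y n j) n - block_start y n j)%nat).
  assert (Hblock : forall j, block_start y n (S j) = (block_start y n j + S (x j))%nat /\
            map y (seq (block_start y n j) (S (x j))) = repeat 1%nat (x j) ++ [0%nat]).
  { intros j. destruct (next_zero_spec y n (block_start y n j) (Hgap _)) as [H1 [H2 H3]].
    unfold x. split; [simpl; lia|]. apply map_ones_zero.
    - intros k Hk. destruct (Hbin k); [exfalso; apply (H3 k); lia | assumption].
    - replace (_ + _)%nat with (next_zero y (block_start y n j) n) by lia. exact H2. }
  exists x. intros m. exists (block_start y n m).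
  induction m as [|m [Hle IH]]; [split; reflexivity|].
  destruct (Hblock m) as [Hstart Hm]. split; [lia|].
  rewrite seq_S, map_app, phi_word_app, IH, Hstart, seq_app, map_app, !Nat.add_0_l, Hm.
  f_equal. apply phi_word_cons.
Qed.

Lemma phi_seq_decoded x y :
  (forall m, exists N, (m <= N)%nat /\ phi_word (map x (seq 0 m)) = map y (seq 0 N)) ->
  forall k, phi_seq x k = y k.
Proof.
  intros Hxy k. destruct (Hxy (S k)) as [N [HN E]].
  rewrite (phi_seq_nth x (S k) k), E by (rewrite E, length_map, length_seq; lia).
  apply nth_map_seq. lia.
Qed.

Lemma phi_seq_surj beta n y : 1 < beta -> beta < INR n ->
  right_ray (lang_phi (lang_beta beta)) y ->
  exists x, right_ray (lang_beta beta) x /\ forall k, phi_seq x k = y k.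
Proof.
  intros Hb Hn Hray.
  assert (Hn0 : (0 < n)%nat) by (apply INR_lt; simpl; lra).
  assert (Hletters : forall w, lang_beta beta w -> forall c, In c w -> (c < n)%nat)
    by (intros w Hw c; apply (lang_beta_letter_lt beta n w c Hb Hn Hw)).
  destruct (phi_word_decode y n (right_ray_lang_phi_binary _ y Hray)
              (right_ray_lang_phi_zero_gap _ n y Hn0 Hletters Hray)) as [x Hx].
  exists x. split; [|apply phi_seq_decoded; exact Hx].
  apply right_ray_of_beta_prefix; [exact Hb|]. intros N.
  destruct (Hx N) as [M [_ HM]]. destruct Hray as [z [Hz Hy]].
  destruct (Hz (-1)%Z (S M)) as [w [Hw [A [B HE]]]].
  rewrite (window_neg1 y z M Hy), <- HM in HE.
  apply lang_beta_spec in Hw as [s [Hs Hp]].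
  apply (beta_prefix_phi_infix beta w s (A ++ [z (-1)%Z]) _ B Hb Hs Hp).
  - rewrite HE, <- app_assoc. reflexivity.
  - destruct A; discriminate.
Qed.

Theorem lemma4p4 (n : nat) (beta : R) :
  1 < beta -> INR n - 1 < beta < INR n ->
  (* phi maps X^+ into X'^+ *)
  (forall x, right_ray (lang_beta beta) x ->
     right_ray (lang_phi (lang_beta beta)) (phi_seq x)) /\
  (* surjective *)
  (forall y, right_ray (lang_phi (lang_beta beta)) y ->
     exists x, right_ray (lang_beta beta) x /\ forall k, phi_seq x k = y k) /\
  (* order preserving *)
  (forall x y, right_ray (lang_beta beta) x -> right_ray (lang_beta beta) y ->
     lex_le x y -> lex_le (phi_seq x) (phi_seq y)).
Proof.
  intros Hb [_ Hn]. split; [|split].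
  - intros x. apply phi_seq_right_ray. exact Hb.
  - intros y. apply (phi_seq_surj beta n); assumption.
  - intros x y _ _. apply phi_seq_lex_mono.
Qed.
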